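(* Let $\tau$ be a $\sigma$-maxitive measure on a $\sigma$-algebra $\mathcal{B}$ of subsets of a nonempty set $E$. Then the following are equivalent: - $\tau$ has the Radon–Nikodym property with respect to the Shilkret integral, i.e. every $\sigma$-maxitive measure $\nu$ on $\mathcal{B}$ with $\nu\ll\tau$ admits a $\mathcal{B}$-measurable $c:E\to[0,\infty]$ with $\nu(B)=\sup_{t\ge0} t\cdot\tau(B\cap\{c>t\})$ for all $B\in\mathcal{B}$; - $\tau$ is $\sigma$-finite and $\sigma$-principal.
   Context: Multiplication on $[0,\infty]$ is the usual one, with the convention $0\cdot\infty=\infty\cdot0=0$. A $\sigma$-maxitive measure on $\mathcal{B}$ is a map $\nu:\mathcal{B}\to[0,\infty]$ with $\nu(\emptyset)=0$ and $\nu(\bigcup_j B_j)=\sup_j\nu(B_j)$ for every countable family $(B_j)$ in $\mathcal{B}$. A map $f:E\to[0,\infty]$ is $\mathcal{B}$-measurable if $\{f>t\}\in\mathcal{B}$ for all $t\in[0,\infty)$. Absolute continuity: $\nu\ll\tau$ means $\nu(B)\le\infty\cdot\tau(B)$ for every $B\in\mathcal{B}$ with $\tau(B)<\infty$; equivalently, $\tau(B)=0$ implies $\nu(B)=0$ for such $B$. $\tau$ is $\sigma$-finite if $E$ is covered by countably many $B_n\in\mathcal{B}$ with $\tau(B_n)<\infty$. A $\sigma$-ideal of $\mathcal{B}$ is a nonempty subfamily closed under countable unions and under passing to measurable subsets. A set is $\tau$-negligible if it is contained in some $B\in\mathcal{B}$ with $\tau(B)=0$. $\tau$ is $\sigma$-principal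 if for every $\sigma$-ideal $\mathcal{I}$ of $\mathcal{B}$ there is $L\in\mathcal{I}$ such that $S\setminus L$ is $\tau$-negligible for all $S\in\mathcal{I}$. *)

From Stdlib Require Import Reals.
Open Scope R_scope.

(* Extended reals used for values in [0, +oo]; nonnegativity is imposed
   explicitly where needed. *)
Inductive xR : Type := Fin (r : R) | PInf.

Definition xle (a b : xR) : Prop :=
  match a, b with
  | _, PInf => True
  | PInf, Fin _ => False
  | Fin x, Fin y => x <= y
  end.

Definition xlt (a b : xR) : Prop :=
  match a, b with
  | Fin x, PInf => True
  | PInf, _ => False
  | Fin x, Fin y => x < y
  end.

(* multiplication on [0,oo] with 0 * oo = oo * 0 = 0 *)
Definition xmul (a b : xR) : xR :=
  match a, b with
  | Fin x, Fin y => Fin (x * y)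
  | Fin x, PInf => if Req_EM_T x 0 then Fin 0 else PInf
  | PInf, Fin y => if Req_EM_T y 0 then Fin 0 else PInf
  | PInf, PInf => PInf
  end.

Definition is_sup (S : xR -> Prop) (s : xR) : Prop :=
  (forall v, S v -> xle v s) /\
  (forall u, (forall v, S v -> xle v u) -> xle s u).

Definition set (E : Type) := E -> Prop.

Definition sigma_algebra {E : Type} (B : set E -> Prop) : Prop :=
  B (fun _ => True) /\
  (forall A, B A -> B (fun x => ~ A x)) /\
  (forall A : nat -> set E, (forall n, B (A n)) -> B (fun x => exists n, A n x)).

Definition sigma_maxitive {E : Type} (B : set E -> Prop) (nu : set E -> xR) : Prop :=
  (forall A, B A -> xle (Fin 0) (nu A)) /\
  nu (fun _ => False) = Fin 0 /\
  (forall A : nat -> set E, (forall n, B (A n)) ->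
     is_sup (fun v => exists n, v = nu (A n)) (nu (fun x => exists n, A n x))).

Definition measurable_fun {E : Type} (B : set E -> Prop) (c : E -> xR) : Prop :=
  (forall x, xle (Fin 0) (c x)) /\
  (forall t, 0 <= t -> B (fun x => xlt (Fin t) (c x))).

Definition abs_cont {E : Type} (B : set E -> Prop) (nu tau : set E -> xR) : Prop :=
  forall A, B A -> xlt (tau A) PInf -> xle (nu A) (xmul PInf (tau A)).

Definition RN_property {E : Type} (B : set E -> Prop) (tau : set E -> xR) : Prop :=
  forall nu : set E -> xR, sigma_maxitive B nu -> abs_cont B nu tau ->
    exists c : E -> xR, measurable_fun B c /\
      forall A, B A ->
        is_sup (fun v => exists t, 0 <= t /\
                  v = xmul (Fin t) (tau (fun x => A x /\ xlt (Fin t) (c x))))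
               (nu A).

Definition sigma_finite {E : Type} (B : set E -> Prop) (tau : set E -> xR) : Prop :=
  exists A : nat -> set E, (forall n, B (A n)) /\ (forall n, xlt (tau (A n)) PInf) /\
    (forall x, exists n, A n x).

Definition sigma_ideal {E : Type} (B : set E -> Prop) (I : set E -> Prop) : Prop :=
  (forall A, I A -> B A) /\
  (exists A, I A) /\
  (forall A : nat -> set E, (forall n, I (A n)) -> I (fun x => exists n, A n x)) /\
  (forall S A, I S -> B A -> (forall x, A x -> S x) -> I A).

Definition negligible {E : Type} (B : set E -> Prop) (tau : set E -> xR) (N : set E) : Prop :=
  exists A, B A /\ tau A = Fin 0 /\ (forall x, N x -> A x).

Definition sigma_principal {E : Type} (B : set E -> Prop) (tau : set E -> xR) : Prop :=
  forall I, sigma_ideal B I ->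
    exists L, I L /\ forall S, I S -> negligible B tau (fun x => S x /\ ~ L x).

(* (=>) Both properties come from densities of zero-one measures.  For a family
   [Z] of sets that behaves like a sigma-ideal and contains the [tau]-null sets,
   [zero_one Z] (0 on [Z], 1 elsewhere) is sigma-maxitive and absolutely
   continuous; its density [c] has [{c <= 0}] in [Z], finite-measure positive
   level sets, and every member of [Z] null above positive levels
   ([zero_one_density]).  Taking [Z] = null sets gives sigma-finiteness,
   taking [Z] = sets covered by a sigma-ideal [I] up to negligible sets gives
   an essential supremum of [I].

   (<=) Given [nu << tau], the sets [C] with [q * tau <= nu] on all measurable
   subsets form a sigma-ideal; let [V_q] be an essential supremum of it for each
   nonnegative rational [q], and [c x = sup {q | x in V_q}].  Each level set
   [{c > t}] is [t]-dominated, which gives the inequality Shilkret <= [nu].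
   Conversely, off [V_q] one has [nu <= q * tau] ([bounded_off_essential_sup]);
   covering a set by the part where [c = +oo], the part where [c = 0] inside
   sets of finite measure, and thin bands [s < c <= (1+d) s], one gets
   [nu <= (1 + 2d)] times the Shilkret integral, for every [d > 0]. *)

From Stdlib Require Import Reals ZArith Lra Lia Classical ClassicalEpsilon
  FunctionalExtensionality PropExtensionality.
Open Scope R_scope.

(** * Order and multiplication on [0, +oo] *)

Lemma xle_refl a : xle a a.
Proof. destruct a; simpl; auto; lra. Qed.

Lemma xle_trans a b c : xle a b -> xle b c -> xle a c.
Proof. destruct a, b, c; simpl; auto; try lra; tauto. Qed.

Lemma xle_antisym a b : xle a b -> xle b a -> a = b.
Proof. destruct a, b; simpl; intros; try tauto. f_equal; lra. Qed.

Lemma xnle_lt a b : ~ xle a b -> xlt b a.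
Proof. destruct a, b; simpl; intros; try tauto; lra. Qed.

Lemma xlt_nle a b : xlt b a -> ~ xle a b.
Proof. destruct a, b; simpl; intros; try tauto; lra. Qed.

Lemma xle_lt_trans a b c : xle a b -> xlt b c -> xlt a c.
Proof. destruct a, b, c; simpl; auto; try lra; tauto. Qed.

Lemma is_sup_unique (S : xR -> Prop) a b : is_sup S a -> is_sup S b -> a = b.
Proof. intros [H1 H2] [H3 H4]. apply xle_antisym; auto. Qed.

Lemma xmul_0l v : xmul (Fin 0) v = Fin 0.
Proof. destruct v; simpl. f_equal; ring. destruct (Req_EM_T 0 0); auto; lra. Qed.

Lemma xmul_Pinf t : t <> 0 -> xmul (Fin t) PInf = PInf.
Proof. intros; simpl. destruct (Req_EM_T t 0); tauto. Qed.

Lemma xmul_Pinf_0 : xmul PInf (Fin 0) = Fin 0.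
Proof. simpl. destruct (Req_EM_T 0 0); [reflexivity | lra]. Qed.

Lemma xmul_Pinf_pos y : y <> 0 -> xmul PInf (Fin y) = PInf.
Proof. simpl. destruct (Req_EM_T y 0); tauto. Qed.

Lemma xmul_nonneg t a : 0 <= t -> xle (Fin 0) a -> xle (Fin 0) (xmul (Fin t) a).
Proof.
  intros Ht Ha; destruct a; simpl in *.
  - nra.
  - destruct (Req_EM_T t 0); simpl; auto; lra.
Qed.

Lemma xmul_mono t a b : 0 <= t -> xle (Fin 0) a -> xle a b ->
  xle (xmul (Fin t) a) (xmul (Fin t) b).
Proof.
  intros Ht Ha Hab; destruct a, b; simpl in *; try tauto.
  - nra.
  - destruct (Req_EM_T t 0); simpl; auto. subst. lra.
  - apply xle_refl.
Qed.

Lemma xmul_mono_t t t' a : 0 <= t -> t <= t' -> xle (Fin 0) a ->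
  xle (xmul (Fin t) a) (xmul (Fin t') a).
Proof.
  intros Ht Htt Ha; destruct a; simpl in *.
  - nra.
  - destruct (Req_EM_T t 0); destruct (Req_EM_T t' 0); simpl; auto; lra.
Qed.

Lemma xmul_le_iff q a b : 0 < q -> xle (Fin 0) a -> xle (Fin 0) b ->
  (xle (xmul (Fin q) a) b <-> xle a (xmul (Fin (/ q)) b)).
Proof.
  intros Hq Ha Hb. assert (Hiq : 0 < / q) by (apply Rinv_0_lt_compat; auto).
  destruct a as [x|], b as [y|]; simpl in *;
    repeat destruct Req_EM_T; simpl; try lra; try tauto.
  split; intro H.
  - apply (Rmult_le_compat_l (/ q)) in H; [|lra].
    replace (/ q * (q * x)) with x in H by (field; lra). exact H.
  - apply (Rmult_le_compat_l q) in H; [|lra].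
    replace (q * (/ q * y)) with y in H by (field; lra). exact H.
Qed.

Lemma xmul_bounded_zero a r : xle (Fin 0) a ->
  (forall t, 0 < t -> xle (xmul (Fin t) a) (Fin r)) -> a = Fin 0.
Proof.
  intros Ha H. destruct a as [z|]; simpl in Ha.
  - destruct (Req_dec z 0) as [->|Hz]; auto. exfalso.
    assert (Hr : 0 <= r) by (specialize (H 1 Rlt_0_1); simpl in H; lra).
    specialize (H ((r + 1) / z) ltac:(apply Rdiv_lt_0_compat; lra)). simpl in H.
    replace ((r + 1) / z * z) with (r + 1) in H by (field; lra). lra.
  - specialize (H 1 Rlt_0_1). rewrite xmul_Pinf in H by lra. simpl in H. tauto.
Qed.

Lemma xmul_pos_zero t a : 0 < t -> xle (Fin 0) a -> xle (xmul (Fin t) a) (Fin 0) -> a = Fin 0.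
Proof.
  intros Ht Ha H. destruct a as [z|].
  - simpl in *. f_equal. nra.
  - rewrite xmul_Pinf in H by lra. simpl in H. tauto.
Qed.

Lemma xmul_bounded_finite t a r : 0 < t -> xle (xmul (Fin t) a) (Fin r) -> xlt a PInf.
Proof.
  intros Ht H. destruct a; simpl; auto. rewrite xmul_Pinf in H by lra. exact H.
Qed.

Lemma le_of_le_mul_all a r : 0 <= r -> xle (Fin 0) a ->
  (forall d, 0 < d -> xle a (Fin ((1 + 2 * d) * r))) -> xle a (Fin r).
Proof.
  intros Hr Ha H. destruct a as [a|].
  - simpl. apply Rnot_lt_le. intro Hlt.
    set (d := (a - r) / (2 * (a + r + 1))).
    assert (Hpos : 0 < a + r + 1) by (simpl in Ha; lra).
    assert (Hd : 0 < d) by (unfold d; apply Rdiv_lt_0_compat; lra).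
    specialize (H d Hd). simpl in H.
    assert (Heq : 2 * d * (a + r + 1) = a - r) by (unfold d; field; lra).
    nra.
  - specialize (H 1 Rlt_0_1). simpl in H. tauto.
Qed.

(** * Countable grids of levels *)

Lemma arch_inv r : 0 < r -> exists k : nat, / (INR k + 1) < r.
Proof.
  intros Hr. destruct (archimed_cor1 r Hr) as [N [HN HN0]].
  exists (pred N). rewrite <- S_INR. rewrite Nat.succ_pred_pos; auto.
Qed.

Lemma inv_succ_pos k : 0 < / (INR k + 1).
Proof. apply Rinv_0_lt_compat. pose proof (pos_INR k). lra. Qed.

Lemma xR_pos_level (v : xR) : xlt (Fin 0) v -> exists k : nat, xlt (Fin (/ (INR k + 1))) v.
Proof.
  destruct v as [r|]; simpl; intros H.
  - destruct (arch_inv r H) as [k Hk]; eauto.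
  - exists 0%nat; auto.
Qed.

Lemma xR_fin_level r : exists k : nat, ~ xlt (Fin (INR k)) (Fin r).
Proof.
  destruct (archimed r) as [H1 _]. simpl.
  destruct (Z_le_gt_dec 0 (up r)) as [Hp|Hn].
  - exists (Z.to_nat (up r)). rewrite INR_IZR_INZ, Z2Nat.id by lia. lra.
  - exists 0%nat. apply Z.gt_lt, IZR_lt in Hn. simpl. lra.
Qed.

(* The nonnegative rationals, enumerated by pairs of naturals. *)
Definition ratio (n m : nat) : R := INR n / (INR m + 1).

Lemma ratio_nonneg n m : 0 <= ratio n m.
Proof.
  unfold ratio. pose proof (pos_INR n). pose proof (pos_INR m).
  apply Rmult_le_pos; auto. left; apply Rinv_0_lt_compat; lra.
Qed.

Lemma ratio_dense a b : 0 <= a -> a < b -> exists n m, a < ratio n m < b.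
Proof.
  intros Ha Hab. destruct (arch_inv (b - a)) as [m Hm]; [lra|].
  set (K := INR m + 1). assert (HK : 0 < K) by (unfold K; pose proof (pos_INR m); lra).
  assert (HK2 : 1 < K * (b - a)).
  { unfold K in *. apply (Rmult_lt_compat_l K) in Hm; auto. unfold K in Hm.
    rewrite Rinv_r in Hm; lra. }
  destruct (archimed (a * K)) as [H1 H2].
  assert (Hpos : (0 < up (a * K))%Z).
  { apply lt_IZR. simpl. pose proof (Rmult_le_pos a K Ha (Rlt_le _ _ HK)). lra. }
  exists (Z.to_nat (up (a * K))), m.
  unfold ratio. rewrite INR_IZR_INZ. rewrite Z2Nat.id by lia.
  fold K. split.
  - apply (Rmult_lt_reg_r K); auto. unfold Rdiv. rewrite Rmult_assoc, Rinv_l by lra. lra.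
  - apply (Rmult_lt_reg_r K); auto. unfold Rdiv. rewrite Rmult_assoc, Rinv_l by lra. nra.
Qed.

Lemma ratio_band v d : 0 < v -> 0 < d ->
  exists n m, ratio n m < v /\ v <= (1 + d) * ratio n m.
Proof.
  intros Hv Hd.
  destruct (ratio_dense (v / (1 + d)) v) as [n [m [H1 H2]]].
  - apply Rlt_le, Rdiv_lt_0_compat; lra.
  - apply (Rmult_lt_reg_r (1 + d)); [lra|]. unfold Rdiv.
    rewrite Rmult_assoc, Rinv_l by lra. nra.
  - exists n, m. split; auto. apply (Rmult_lt_compat_r (1 + d)) in H1; [|lra].
    unfold Rdiv in H1. rewrite Rmult_assoc, Rinv_l in H1 by lra. lra.
Qed.

Lemma ratio_1 m : ratio 1 m = / (INR m + 1).
Proof. unfold ratio. simpl. lra. Qed.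

Lemma choice_nat {T} (P : nat -> T -> Prop) :
  (forall n, exists x, P n x) -> exists f, forall n, P n (f n).
Proof.
  intros H. exists (fun n => proj1_sig (constructive_indefinite_description _ (H n))).
  intros n. exact (proj2_sig (constructive_indefinite_description _ (H n))).
Qed.

(** * Sets, sigma-algebras and sigma-maxitive measures *)

Lemma set_ext {E} (P Q : set E) : (forall x, P x <-> Q x) -> P = Q.
Proof.
  intro H. apply functional_extensionality; intro x.
  apply propositional_extensionality; auto.
Qed.

Definition seq2 {E} (A C : set E) : nat -> set E :=
  fun n => match n with O => A | _ => C end.

Lemma seq2_union {E} (A C : set E) x : (exists n, seq2 A C n x) <-> (A x \/ C x).
Proof.
  split.
  - intros [[|n] H]; simpl in H; auto.
  - intros [H|H]; [exists O | exists 1%nat]; auto.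
Qed.

Section Shilkret.

Context {E : Type} {B : set E -> Prop} (HB : sigma_algebra B).

Lemma B_ext P Q : B P -> (forall x, P x <-> Q x) -> B Q.
Proof. intros HP H. rewrite <- (set_ext P Q H). auto. Qed.

Lemma B_full : B (fun _ => True).
Proof. apply HB. Qed.

Lemma B_compl A : B A -> B (fun x => ~ A x).
Proof. apply HB. Qed.

Lemma B_cunion (A : nat -> set E) : (forall n, B (A n)) -> B (fun x => exists n, A n x).
Proof. apply HB. Qed.

Lemma B_union A C : B A -> B C -> B (fun x => A x \/ C x).
Proof.
  intros HA HC. apply (B_ext (fun x => exists n, seq2 A C n x)); [|apply seq2_union].
  apply B_cunion. intros [|n]; simpl; auto.
Qed.

Lemma B_empty : B (fun _ => False).
Proof. apply (B_ext (fun x => ~ True)); [apply B_compl, B_full | tauto]. Qed.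

Lemma B_inter A C : B A -> B C -> B (fun x => A x /\ C x).
Proof.
  intros HA HC. apply (B_ext (fun x => ~ ((~ A x) \/ (~ C x)))); [|intro x; tauto].
  apply B_compl, B_union; apply B_compl; auto.
Qed.

Lemma B_diff A C : B A -> B C -> B (fun x => A x /\ ~ C x).
Proof. intros. apply B_inter; auto. apply B_compl; auto. Qed.

Lemma B_cinter (P : nat -> set E) : (forall n, B (P n)) -> B (fun x => forall n, P n x).
Proof.
  intros HP. apply (B_ext (fun x => ~ exists n, ~ P n x)).
  - apply B_compl, B_cunion. intro n. apply B_compl; auto.
  - intro x. split; [intros H n; apply NNPP; intro; apply H; eauto | intros H [n Hn]; auto].
Qed.

Section Maxitive.

Context {mu : set E -> xR} (Hmu : sigma_maxitive B mu).

Lemma mu_nonneg A : B A -> xle (Fin 0) (mu A).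
Proof. apply Hmu. Qed.

Lemma mu_empty A : (forall x, ~ A x) -> mu A = Fin 0.
Proof. intros HA. rewrite (set_ext A (fun _ => False)); [apply Hmu | firstorder]. Qed.

Lemma mu_cunion_le (A : nat -> set E) w : (forall n, B (A n)) ->
  (forall n, xle (mu (A n)) w) -> xle (mu (fun x => exists n, A n x)) w.
Proof.
  intros HA Hw. apply (proj2 (proj2 (proj2 Hmu) A HA)). intros v [n ->]; auto.
Qed.

Lemma mu_cunion_ge (A : nat -> set E) n : (forall n, B (A n)) ->
  xle (mu (A n)) (mu (fun x => exists n, A n x)).
Proof. intros HA. apply (proj1 (proj2 (proj2 Hmu) A HA)). eauto. Qed.

Lemma mu_union_le A C w : B A -> B C ->
  xle (mu A) w -> xle (mu C) w -> xle (mu (fun x => A x \/ C x)) w.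
Proof.
  intros HA HC H1 H2. rewrite <- (set_ext _ _ (seq2_union A C)).
  apply mu_cunion_le; intros [|n]; simpl; auto.
Qed.

Lemma mu_mono A C : B A -> B C -> (forall x, A x -> C x) -> xle (mu A) (mu C).
Proof.
  intros HA HC Hs.
  rewrite (set_ext C (fun x => exists n, seq2 A C n x)) by (intro x; rewrite seq2_union; firstorder).
  apply (mu_cunion_ge (seq2 A C) 0). intros [|n]; simpl; auto.
Qed.

Lemma mu_zero_of_le A : B A -> xle (mu A) (Fin 0) -> mu A = Fin 0.
Proof. intros. apply xle_antisym; auto. apply mu_nonneg; auto. Qed.

Lemma mu_cunion_zero (A : nat -> set E) : (forall n, B (A n)) ->
  (forall n, mu (A n) = Fin 0) -> mu (fun x => exists n, A n x) = Fin 0.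
Proof.
  intros HA H0. apply mu_zero_of_le; [apply B_cunion; auto|].
  apply mu_cunion_le; auto. intro n; rewrite H0; apply xle_refl.
Qed.

End Maxitive.

Section Reference.

Context {tau : set E -> xR} (Htau : sigma_maxitive B tau).

(** * Negligible sets *)

Lemma negl_sub (N N' : set E) :
  negligible B tau N -> (forall x, N' x -> N x) -> negligible B tau N'.
Proof. intros [A [H1 [H2 H3]]] H. exists A; auto. Qed.

Lemma negl_empty (N : set E) : (forall x, ~ N x) -> negligible B tau N.
Proof.
  intros H. exists (fun _ => False). split; [apply B_empty | split; [apply Htau | firstorder]].
Qed.

Lemma negl_cunion (N : nat -> set E) :
  (forall n, negligible B tau (N n)) -> negligible B tau (fun x => exists n, N n x).
Proof.
  intros H. destruct (choice_nat _ H) as [M HM].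
  exists (fun x => exists n, M n x). split; [|split].
  - apply B_cunion. intro n; apply HM.
  - apply (mu_cunion_zero Htau); intro n; apply HM.
  - intros x [n Hn]. exists n. apply (HM n); auto.
Qed.

Lemma negl_null N : B N -> negligible B tau N -> tau N = Fin 0.
Proof.
  intros HN [A [HA [H0 Hs]]]. apply (mu_zero_of_le Htau); auto.
  rewrite <- H0. apply (mu_mono Htau); auto.
Qed.

(** * The zero-one measure of a family of sets *)

(* If [Z] behaves like
   a sigma-ideal on measurable sets and contains the [tau]-null sets, it is a
   sigma-maxitive measure absolutely continuous w.r.t. [tau]; its Radon-Nikodym
   density then describes [Z] in terms of [tau]. *)
Definition zero_one (Z : set E -> Prop) (A : set E) : xR :=
  if excluded_middle_informative (Z A) then Fin 0 else Fin 1.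

Lemma zero_one_le1 Z A : xle (zero_one Z A) (Fin 1).
Proof. unfold zero_one; destruct excluded_middle_informative; simpl; lra. Qed.

Lemma zero_one_in Z A : Z A -> zero_one Z A = Fin 0.
Proof. unfold zero_one; destruct excluded_middle_informative; tauto. Qed.

Lemma zero_one_zero Z A : xle (zero_one Z A) (Fin 0) -> Z A.
Proof. unfold zero_one; destruct excluded_middle_informative; simpl; auto; lra. Qed.

Section ZeroOne.

Variable Z : set E -> Prop.
Hypothesis HZnull : forall A, B A -> tau A = Fin 0 -> Z A.
Hypothesis HZunion : forall A : nat -> set E, (forall n, B (A n)) ->
  (Z (fun x => exists n, A n x) <-> forall n, Z (A n)).

Lemma zero_one_maxitive : sigma_maxitive B (zero_one Z).
Proof.
  split; [|split].
  - intros A _; unfold zero_one; destruct excluded_middle_informative; simpl; lra.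
  - apply zero_one_in, HZnull; [apply B_empty | apply Htau].
  - intros A HA. split.
    + intros v [n ->]. destruct (classic (Z (fun x => exists n, A n x))) as [Hz|Hz].
      * rewrite !zero_one_in; [apply xle_refl | auto | exact (proj1 (HZunion A HA) Hz n)].
      * unfold zero_one at 2. destruct excluded_middle_informative; [tauto|apply zero_one_le1].
    + intros u Hu. destruct (classic (forall n, Z (A n))) as [Hz|Hz].
      * rewrite zero_one_in by (apply HZunion; auto).
        specialize (Hu _ (ex_intro _ 0%nat eq_refl)). rewrite zero_one_in in Hu; auto.
      * apply not_all_ex_not in Hz as [n Hn].
        specialize (Hu _ (ex_intro _ n eq_refl)). unfold zero_one in *.
        do 2 destruct excluded_middle_informative; auto; try tauto.
        exfalso. apply Hn. apply (proj1 (HZunion A HA) z n).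
Qed.

Lemma zero_one_abs_cont : abs_cont B (zero_one Z) tau.
Proof.
  intros A HA Hf. destruct (tau A) as [y|] eqn:Hy; [|contradiction].
  destruct (Req_dec y 0) as [->|Hy0].
  - rewrite zero_one_in, xmul_Pinf_0 by auto. apply xle_refl.
  - rewrite xmul_Pinf_pos by auto. destruct (zero_one Z A); exact I.
Qed.

Lemma shilkret_nonpos_part (c : E -> xR) :
  is_sup (fun v => exists t, 0 <= t /\
            v = xmul (Fin t) (tau (fun x => ~ xlt (Fin 0) (c x) /\ xlt (Fin t) (c x))))
         (Fin 0).
Proof.
  split.
  - intros v [t [Ht0 ->]]. rewrite (mu_empty Htau).
    + destruct (Req_EM_T t 0) as [->|]; [rewrite xmul_0l; apply xle_refl | simpl; lra].
    + intros x [H1 H2]. apply H1. destruct (c x); simpl in *; auto; lra.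
  - intros u Hu. rewrite <- (xmul_0l (tau (fun x => ~ xlt (Fin 0) (c x) /\ xlt (Fin 0) (c x)))).
    apply Hu. exists 0. split; [lra | reflexivity].
Qed.

Lemma zero_one_density : RN_property B tau ->
  exists c : E -> xR, measurable_fun B c /\
    Z (fun x => ~ xlt (Fin 0) (c x)) /\
    (forall A t, B A -> Z A -> 0 < t -> tau (fun x => A x /\ xlt (Fin t) (c x)) = Fin 0) /\
    (forall t, 0 < t -> xlt (tau (fun x => xlt (Fin t) (c x))) PInf).
Proof.
  intros HRN.
  destruct (HRN _ zero_one_maxitive zero_one_abs_cont) as [c [Hc HR]].
  assert (Hlevel : forall A t, B A -> 0 < t ->
            xle (xmul (Fin t) (tau (fun x => A x /\ xlt (Fin t) (c x)))) (zero_one Z A)).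
  { intros A t HA Ht. apply (HR A HA). exists t. split; [lra | reflexivity]. }
  assert (Hmeas : forall A t, B A -> 0 < t -> B (fun x => A x /\ xlt (Fin t) (c x))).
  { intros A t HA Ht. apply B_inter; auto. apply Hc; lra. }
  exists c. split; [exact Hc | split; [|split]].
  - assert (HB0 : B (fun x => ~ xlt (Fin 0) (c x))) by (apply B_compl, Hc; lra).
    apply zero_one_zero.
    rewrite (is_sup_unique _ _ _ (HR _ HB0) (shilkret_nonpos_part c)). apply xle_refl.
  - intros A t HA HZA Ht. apply (xmul_pos_zero t); auto.
    + apply (mu_nonneg Htau); auto.
    + rewrite <- (zero_one_in Z A HZA). auto.
  - intros t Ht. apply (xmul_bounded_finite t _ 1 Ht).
    rewrite (set_ext _ (fun x => True /\ xlt (Fin t) (c x))) by tauto.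
    eapply xle_trans; [apply Hlevel; auto; apply B_full | apply zero_one_le1].
Qed.

End ZeroOne.

Lemma positive_levels_cover (c : E -> xR) x :
  ~ xlt (Fin 0) (c x) \/ exists k, xlt (Fin (/ (INR k + 1))) (c x).
Proof.
  destruct (classic (xlt (Fin 0) (c x))) as [H|H]; [right; apply xR_pos_level | left]; auto.
Qed.

(** * The Radon-Nikodym property forces sigma-finiteness *)

(* Apply [zero_one_density] to the family of [tau]-null sets: [{c <= 0}] is
   null, and the sets [{c > 1/(k+1)}] have finite measure. *)
Lemma RN_sigma_finite : RN_property B tau -> sigma_finite B tau.
Proof.
  intros HRN.
  destruct (zero_one_density (fun A => tau A = Fin 0)) as [c [Hc [Hnull [_ Hfin]]]]; auto.
  { intros A HA. split.
    - intros H n. apply (mu_zero_of_le Htau); auto. rewrite <- H.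
      apply (mu_cunion_ge Htau); auto.
    - apply (mu_cunion_zero Htau); auto. }
  exists (fun n => match n with
           | O => fun x => ~ xlt (Fin 0) (c x)
           | S k => fun x => xlt (Fin (/ (INR k + 1))) (c x) end).
  split; [|split].
  - intros [|k]; [apply B_compl|]; apply Hc; [lra | left; apply inv_succ_pos].
  - intros [|k]; [rewrite Hnull; exact I | apply Hfin, inv_succ_pos].
  - intros x. destruct (positive_levels_cover c x) as [H|[k Hk]]; [exists O | exists (S k)]; auto.
Qed.

(** * The Radon-Nikodym property forces sigma-principality *)

(* For a sigma-ideal [I], apply [zero_one_density] to the sets covered by a
   member of [I] up to a negligible set.  The member [L] covering [{c <= 0}]
   is essentially largest: any [S] in [I] is null above every positive level
   of [c], hence [S \ L] is negligible. *)
Lemma RN_sigma_principal : RN_property B tau -> sigma_principal B tau.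
Proof.
  intros HRN I [HIB [[S00 HS00] [HIU HIH]]].
  set (Z := fun A : set E => exists S, I S /\ negligible B tau (fun x => A x /\ ~ S x)).
  destruct (zero_one_density Z) as [c [Hc [[L [HL HLneg]] [Hnull _]]]]; auto.
  { intros A HA H0. exists S00. split; auto. exists A; repeat split; tauto. }
  { intros A HA. split.
    - intros [S [HS HN]] n. exists S. split; auto. apply (negl_sub _ _ HN). firstorder.
    - intros H. destruct (choice_nat _ H) as [S HS].
      exists (fun x => exists n, S n x). split; [apply HIU; intro n; apply HS|].
      apply (negl_sub (fun x => exists n, A n x /\ ~ S n x)).
      + apply negl_cunion. intro n; apply HS.
      + intros x [[n Hn] Hx]. exists n. split; auto. intro; apply Hx; eauto. }
  exists L. split; auto. intros S HS.
  assert (HZS : Z S) by (exists S; split; auto; apply negl_empty; tauto).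
  apply (negl_sub (fun x => (~ xlt (Fin 0) (c x) /\ ~ L x) \/
                            exists k, S x /\ xlt (Fin (/ (INR k + 1))) (c x))).
  - rewrite <- (set_ext _ _ (seq2_union _ _)). apply negl_cunion. intros [|n]; simpl; auto.
    apply negl_cunion. intro k. exists (fun x => S x /\ xlt (Fin (/ (INR k + 1))) (c x)).
    split; [|split; [|auto]].
    + apply B_inter; auto. apply Hc. left; apply inv_succ_pos.
    + apply Hnull; auto. apply inv_succ_pos.
  - intros x [HSx HLx]. destruct (positive_levels_cover c x) as [H|[k Hk]]; [left | right]; eauto.
Qed.


(** * Sigma-finiteness and sigma-principality give the Radon-Nikodym property *)

Section Backward.

Context {nu : set E -> xR} (Hnu : sigma_maxitive B nu) (Hac : abs_cont B nu tau).

Lemma abs_cont_null A : B A -> tau A = Fin 0 -> nu A = Fin 0.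
Proof.
  intros HA H0. apply (mu_zero_of_le Hnu); auto.
  pose proof (Hac A HA) as H. rewrite H0, xmul_Pinf_0 in H. apply H. exact I.
Qed.

Definition dominated (q : R) (C : set E) : Prop :=
  B C /\ forall C', B C' -> (forall x, C' x -> C x) -> xle (xmul (Fin q) (tau C')) (nu C').

Lemma scaled_cunion_le q (P : nat -> set E) : 0 <= q -> (forall n, B (P n)) ->
  (forall n, xle (xmul (Fin q) (tau (P n))) (nu (P n))) ->
  xle (xmul (Fin q) (tau (fun x => exists n, P n x))) (nu (fun x => exists n, P n x)).
Proof.
  intros Hq HP H.
  assert (HU : B (fun x => exists n, P n x)) by (apply B_cunion; auto).
  destruct (Req_dec q 0) as [->|Hq0]; [rewrite xmul_0l; apply (mu_nonneg Hnu); auto|].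
  assert (Hqpos : 0 < q) by lra.
  apply xmul_le_iff; auto; try apply (mu_nonneg Htau); try apply (mu_nonneg Hnu); auto.
  apply (mu_cunion_le Htau); auto. intro n.
  apply xle_trans with (xmul (Fin (/ q)) (nu (P n))).
  - apply xmul_le_iff; auto; [apply (mu_nonneg Htau) | apply (mu_nonneg Hnu)]; auto.
  - apply xmul_mono; [left; apply Rinv_0_lt_compat; lra | apply (mu_nonneg Hnu); auto |].
    apply (mu_cunion_ge Hnu); auto.
Qed.

Lemma dominated_sigma_ideal q : 0 <= q -> sigma_ideal B (dominated q).
Proof.
  intros Hq. split; [|split; [|split]].
  - intros A [H _]; auto.
  - exists (fun _ => False). split; [apply B_empty|].
    intros C' HC' Hs. rewrite (mu_empty Htau C') by auto. simpl. rewrite Rmult_0_r.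
    apply (mu_nonneg Hnu); auto.
  - intros A HA. split; [apply B_cunion; intro n; apply HA|].
    intros C' HC' Hs.
    assert (HP : forall n, B (fun x => C' x /\ A n x)) by (intro n; apply B_inter; auto; apply HA).
    rewrite (set_ext C' (fun x => exists n, C' x /\ A n x)) by firstorder.
    apply scaled_cunion_le; auto.
    intro n. apply (HA n); auto. intros x [_ H]; auto.
  - intros S A [HS HS2] HA Hs. split; auto.
Qed.

Lemma dominated_antitone t q C : 0 <= t -> t <= q -> dominated q C -> dominated t C.
Proof.
  intros Ht Htq [HC H]. split; auto. intros C' HC' Hs.
  apply xle_trans with (xmul (Fin q) (tau C')); auto.
  apply xmul_mono_t; auto. apply (mu_nonneg Htau); auto.
Qed.

Definition bounded_inside (q : R) (D C : set E) : Prop :=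
  B C /\ exists M, B M /\ (forall x, C x -> M x) /\ (forall x, M x -> D x) /\
                   xle (nu M) (xmul (Fin q) (tau M)).

Lemma bounded_inside_sigma_ideal q D : 0 <= q -> sigma_ideal B (bounded_inside q D).
Proof.
  intros Hq. split; [|split; [|split]].
  - intros A [H _]; auto.
  - exists (fun _ => False). split; [apply B_empty|].
    exists (fun _ => False). split; [apply B_empty | split; [tauto | split; [tauto|]]].
    rewrite (mu_empty Hnu) by auto. apply xmul_nonneg; auto. apply (mu_nonneg Htau), B_empty.
  - intros A HA. split; [apply B_cunion; intro k; apply HA|].
    destruct (choice_nat (fun k M => B M /\ (forall x, A k x -> M x) /\ (forall x, M x -> D x) /\
                                    xle (nu M) (xmul (Fin q) (tau M)))) as [M HM].
    { intro k. apply (HA k). }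
    assert (HMB : forall k, B (M k)) by (intro k; apply HM).
    exists (fun x => exists k, M k x). split; [apply B_cunion; auto | split; [|split]].
    + intros x [k Hk]. exists k. apply (HM k); auto.
    + intros x [k Hk]. apply (HM k); auto.
    + apply (mu_cunion_le Hnu); auto. intro k.
      apply xle_trans with (xmul (Fin q) (tau (M k))); [apply (HM k)|].
      apply xmul_mono; auto; [apply (mu_nonneg Htau); auto | apply (mu_cunion_ge Htau); auto].
  - intros S A [HS [M HM]] HA Hs. split; auto. exists M. intuition.
Qed.

Hypothesis Hpr : sigma_principal B tau.

(* Take an essential
   supremum [L], covered by [M0], of the sets [q]-bounded inside [D]; the rest
   [D \ M0] is then [q]-dominated, so [tau]- and [nu]-null. *)
Lemma bounded_off_essential_sup q (V D : set E) : 0 <= q ->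
  (forall S, dominated q S -> negligible B tau (fun x => S x /\ ~ V x)) ->
  B D -> (forall x, D x -> ~ V x) -> xle (nu D) (xmul (Fin q) (tau D)).
Proof.
  intros Hq HVess HD Hdisj.
  destruct (Hpr _ (bounded_inside_sigma_ideal q D Hq))
    as [L [[HLB [M0 [HM0B [HLM0 [HM0D HM0]]]]] HLess]].
  set (C := fun x => D x /\ ~ M0 x).
  assert (HCB : B C) by (apply B_diff; auto).
  assert (HCdom : dominated q C).
  { split; auto. intros C' HC' Hs. apply NNPP. intro Hnle. apply xnle_lt in Hnle.
    assert (HC'in : bounded_inside q D C').
    { split; auto. exists C'. split; auto. split; [auto | split; [firstorder|]].
      destruct (nu C'), (xmul (Fin q) (tau C')); simpl in *; auto; lra. }
    assert (Hz : tau C' = Fin 0).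
    { apply negl_null; auto. apply (negl_sub _ _ (HLess C' HC'in)).
      intros x Hx. split; auto. intro HL. apply (Hs x Hx), HLM0, HL. }
    apply (xlt_nle _ _ Hnle). rewrite Hz. simpl. rewrite Rmult_0_r.
    apply (mu_nonneg Hnu); auto. }
  assert (HC0 : nu C = Fin 0).
  { apply abs_cont_null; auto. apply negl_null; auto.
    apply (negl_sub _ _ (HVess C HCdom)). intros x Hx. split; auto. apply Hdisj, Hx. }
  apply xle_trans with (nu (fun x => M0 x \/ C x)).
  - apply (mu_mono Hnu); [auto | apply B_union; auto |].
    intros x Hx. destruct (classic (M0 x)); [left | right]; unfold C; auto.
  - apply (mu_union_le Hnu); auto.
    + apply xle_trans with (xmul (Fin q) (tau M0)); auto.
      apply xmul_mono; auto; [apply (mu_nonneg Htau); auto | apply (mu_mono Htau); auto].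
    + rewrite HC0. apply xmul_nonneg; auto. apply (mu_nonneg Htau); auto.
Qed.

Section Density.

Variable V : nat -> nat -> set E.
Hypothesis HV : forall n m, dominated (ratio n m) (V n m).
Hypothesis HVess : forall n m S,
  dominated (ratio n m) S -> negligible B tau (fun x => S x /\ ~ V n m x).

Definition levels_at (x : E) : R -> Prop :=
  fun r => r = 0 \/ exists n m, V n m x /\ r = ratio n m.

(* The candidate density: [c x] is the supremum of the rational levels [q]
   with [x] in [V_q] (and [0]), or [+oo] when these are unbounded. *)
Definition density (x : E) : xR :=
  match excluded_middle_informative (bound (levels_at x)) with
  | left Hb => Fin (proj1_sig (completeness (levels_at x) Hb (ex_intro _ 0 (or_introl eq_refl))))
  | right _ => PInf
  end.

Lemma density_nonneg x : xle (Fin 0) (density x).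
Proof.
  unfold density. destruct excluded_middle_informative as [Hb|Hb]; simpl; auto.
  destruct (completeness _ _ _) as [l [Hl1 Hl2]]. simpl. apply Hl1. left; auto.
Qed.

Lemma density_level x t : 0 <= t ->
  (xlt (Fin t) (density x) <-> exists n m, V n m x /\ t < ratio n m).
Proof.
  intros Ht. unfold density. destruct excluded_middle_informative as [Hb|Hb].
  - destruct (completeness _ _ _) as [l [Hl1 Hl2]]. simpl. split.
    + intros Htl. apply NNPP. intro Hno. assert (l <= t); [|lra].
      apply Hl2. intros r [->|[n [m [Hv ->]]]]; auto.
      apply Rnot_lt_le. intro. apply Hno; eauto.
    + intros [n [m [Hv Hlt]]]. assert (ratio n m <= l); [|lra].
      apply Hl1. right; eauto.
  - simpl. split; auto. intros _. apply NNPP. intro Hno. apply Hb. exists t.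
    intros r [->|[n [m [Hv ->]]]]; auto.
    apply Rnot_lt_le. intro. apply Hno; eauto.
Qed.

Lemma density_level_eq t : 0 <= t ->
  (fun x => xlt (Fin t) (density x)) =
  (fun x => exists n m, V n m x /\ t < ratio n m).
Proof. intros Ht. apply set_ext. intro x. apply density_level; auto. Qed.

Lemma V_above_measurable t n m : B (fun x => V n m x /\ t < ratio n m).
Proof.
  destruct (Rlt_dec t (ratio n m)) as [H|H].
  - apply (B_ext (V n m)); [apply HV | intuition].
  - apply (B_ext (fun _ => False)); [apply B_empty | intuition].
Qed.

Lemma density_measurable : measurable_fun B density.
Proof.
  split; [exact density_nonneg|]. intros t Ht. rewrite density_level_eq by auto.
  apply B_cunion. intro n. apply B_cunion. intro m. apply V_above_measurable.
Qed.

Lemma density_infinite_measurable : B (fun x => forall k : nat, xlt (Fin (INR k)) (density x)).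
Proof.
  apply (B_cinter (fun k x => xlt (Fin (INR k)) (density x))).
  intro k; apply density_measurable, pos_INR.
Qed.

(* Each level set [{c > t}] is [t]-dominated, being a countable union of
   [q]-dominated sets with [q > t]. *)
Lemma density_level_dominated t : 0 <= t ->
  dominated t (fun x => xlt (Fin t) (density x)).
Proof.
  intros Ht0.
  destruct (dominated_sigma_ideal t Ht0) as [_ [[S0 HS0] [Hunion Hhered]]].
  rewrite density_level_eq by auto. apply Hunion. intro n. apply Hunion. intro m.
  destruct (Rlt_dec t (ratio n m)) as [H|H].
  - apply (Hhered (V n m)); [| apply V_above_measurable | intuition].
    apply (dominated_antitone t (ratio n m)); auto; lra.
  - apply (Hhered S0); [auto | apply V_above_measurable | intros x [_ Hx]; contradiction].
Qed.

Lemma shilkret_le A t : B A -> 0 <= t ->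
  xle (xmul (Fin t) (tau (fun x => A x /\ xlt (Fin t) (density x)))) (nu A).
Proof.
  intros HA Ht0.
  destruct (density_level_dominated t Ht0) as [HG HGdom].
  assert (HAG : B (fun x => A x /\ xlt (Fin t) (density x))) by (apply B_inter; auto).
  apply xle_trans with (nu (fun x => A x /\ xlt (Fin t) (density x))).
  - apply HGdom; auto. intros x [_ H]; auto.
  - apply (mu_mono Hnu); auto. intros x [H _]; auto.
Qed.

(* Where [c] vanishes, [nu] is null on every set of finite [tau]-measure:
   such a set is disjoint from each [V_(1/(m+1))]. *)
Lemma nu_null_where_density_vanishes D : B D -> xlt (tau D) PInf ->
  (forall x, D x -> ~ xlt (Fin 0) (density x)) -> nu D = Fin 0.
Proof.
  intros HD Hfin Hzero.
  pose proof (mu_nonneg Htau D HD) as Hz0. pose proof (mu_nonneg Hnu D HD) as Ha0.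
  assert (Hbound : forall m, xle (nu D) (xmul (Fin (/ (INR m + 1))) (tau D))).
  { intro m. rewrite <- ratio_1. apply (bounded_off_essential_sup _ (V 1 m)); auto.
    - apply ratio_nonneg.
    - intros x Hx Hv. apply (Hzero x Hx). apply density_level; [lra|].
      exists 1%nat, m. rewrite ratio_1. split; auto. apply inv_succ_pos. }
  destruct (tau D) as [z|]; [|contradiction]. simpl in Hz0.
  destruct (nu D) as [a|]; [|specialize (Hbound 0%nat); contradiction].
  simpl in Ha0. f_equal. apply Rle_antisym; auto. apply Rnot_lt_le. intro Hapos.
  destruct (arch_inv (a / (z + 1))) as [m Hm]; [apply Rdiv_lt_0_compat; lra|].
  specialize (Hbound m). simpl in Hbound. pose proof (inv_succ_pos m).
  apply (Rmult_lt_compat_r (z + 1)) in Hm; [|lra].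
  replace (a / (z + 1) * (z + 1)) with a in Hm by (field; lra). nra.
Qed.

Section LowerBound.

Variables (A : set E) (r : R).
Hypothesis HA : B A.
Hypothesis Hub : forall t, 0 <= t ->
  xle (xmul (Fin t) (tau (fun x => A x /\ xlt (Fin t) (density x)))) (Fin r).

Lemma level_measurable t : 0 <= t -> B (fun x => A x /\ xlt (Fin t) (density x)).
Proof. intros Ht. apply B_inter; auto. apply density_measurable; auto. Qed.

(* Where [c = +oo], [tau] and hence [nu] vanish. *)
Lemma nu_null_where_density_infinite :
  nu (fun x => A x /\ forall k : nat, xlt (Fin (INR k)) (density x)) = Fin 0.
Proof.
  assert (HPB : B (fun x => A x /\ forall k : nat, xlt (Fin (INR k)) (density x)))
    by (apply B_inter; auto; apply density_infinite_measurable).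
  apply abs_cont_null; auto. apply (xmul_bounded_zero _ r); [apply (mu_nonneg Htau); auto|].
  intros t Ht0. eapply xle_trans; [|apply (Hub t); lra].
  apply xmul_mono; [lra | apply (mu_nonneg Htau); auto |].
  apply (mu_mono Htau); auto; [apply level_measurable; lra|].
  intros x [HAx Hk]. split; auto. destruct (density x) as [v|]; [|exact I].
  destruct (xR_fin_level v) as [k Hk']. contradiction (Hk' (Hk k)).
Qed.

(* On a band [s < c <= (1+d) s] (with [s] rational), [nu] is at most
   [(1 + 2d) r]: pick a rational [q'] in [((1+d) s, (1+2d) s)]; the band is
   disjoint from [V_q'], so [nu <= q' tau <= (1+2d) s tau(A /\ {c > s})]. *)
Lemma nu_band_bound n m d : 0 < d -> 0 <= r ->
  xle (nu (fun x => (A x /\ xlt (Fin (ratio n m)) (density x)) /\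
                    ~ xlt (Fin ((1 + d) * ratio n m)) (density x)))
      (Fin ((1 + 2 * d) * r)).
Proof.
  intros Hd Hr. pose proof (ratio_nonneg n m) as Hs0. set (s := ratio n m) in *.
  set (P := fun x => (A x /\ xlt (Fin s) (density x)) /\ ~ xlt (Fin ((1 + d) * s)) (density x)).
  assert (HPB : B P) by (apply B_diff; [apply level_measurable | apply density_measurable]; nra).
  destruct (Req_dec s 0) as [Hs|Hs].
  { rewrite (mu_empty Hnu); [simpl; nra|].
    intros x [[_ H1] H2]. apply H2. rewrite Hs, Rmult_0_r. rewrite Hs in H1. exact H1. }
  destruct (ratio_dense ((1 + d) * s) ((1 + 2 * d) * s)) as [n' [m' [Hd1 Hd2]]]; [nra|nra|].
  assert (Hband : xle (nu P) (xmul (Fin (ratio n' m')) (tau P))).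
  { apply (bounded_off_essential_sup _ (V n' m')); auto; [apply ratio_nonneg|].
    intros x [_ Hx] Hv. apply Hx. apply density_level; [nra|]. exists n', m'. auto. }
  assert (Hmono : xle (tau P) (tau (fun x => A x /\ xlt (Fin s) (density x)))).
  { apply (mu_mono Htau); auto; [apply level_measurable; lra | intros x [H _]; auto]. }
  pose proof (Hub s Hs0) as Hubs. pose proof (mu_nonneg Htau P HPB) as Hz0.
  destruct (tau (fun x => A x /\ xlt (Fin s) (density x))) as [y|];
    [|rewrite xmul_Pinf in Hubs by lra; contradiction].
  destruct (tau P) as [z|]; [|contradiction]. simpl in Hubs, Hband, Hmono, Hz0.
  eapply xle_trans; [exact Hband|]. simpl.
  assert (ratio n' m' * z <= (1 + 2 * d) * s * y) by (apply Rmult_le_compat; nra).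
  nra.
Qed.

(* Lower bound, up to the factor [1 + 2d]: cover [A] by the part where
   [c = +oo], the parts of the finite-measure pieces [F k] where [c <= 0], and
   the bands [s < c <= (1+d) s]; [nu] is maxitive over this countable cover. *)
Lemma nu_le_shilkret_bound d : sigma_finite B tau -> 0 < d -> 0 <= r ->
  xle (nu A) (Fin ((1 + 2 * d) * r)).
Proof.
  intros [F [HFB [HFfin HFcov]]] Hd Hr.
  set (Pinf := fun x => A x /\ forall k : nat, xlt (Fin (INR k)) (density x)).
  set (P0 := fun k x => F k x /\ ~ xlt (Fin 0) (density x)).
  set (Pm := fun n m x => (A x /\ xlt (Fin (ratio n m)) (density x)) /\
                          ~ xlt (Fin ((1 + d) * ratio n m)) (density x)).
  assert (HPinfB : B Pinf) by (apply B_inter; auto; apply density_infinite_measurable).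
  assert (HP0B : forall k, B (P0 k)) by (intro k; apply B_diff; auto; apply density_measurable; lra).
  assert (HPmB : forall n m, B (Pm n m)).
  { intros n m. pose proof (ratio_nonneg n m).
    apply B_diff; [apply level_measurable | apply density_measurable]; nra. }
  assert (HPmU : forall n, B (fun x => exists m, Pm n m x)) by (intro n; apply B_cunion; auto).
  set (U := fun x => Pinf x \/ ((exists k, P0 k x) \/ (exists n m, Pm n m x))).
  assert (HUB : B U) by (repeat apply B_union; auto; apply B_cunion; auto).
  apply xle_trans with (nu U).
  - apply (mu_mono Hnu); auto. intros x HAx. unfold U.
    destruct (density x) as [v|] eqn:Hc.
    + destruct (Rle_dec v 0) as [Hv|Hv].
      * right; left. destruct (HFcov x) as [k Hk]. exists k. unfold P0. rewrite Hc. simpl.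
        split; auto. lra.
      * right; right. destruct (ratio_band v d) as [n [m [H1 H2]]]; [lra | auto |].
        exists n, m. unfold Pm. rewrite Hc. simpl. split; auto. lra.
    + left. split; auto. intro k. rewrite Hc. exact I.
  - assert (Hw : 0 <= (1 + 2 * d) * r) by nra.
    repeat apply (mu_union_le Hnu); repeat apply B_union; auto; try apply B_cunion; auto.
    + unfold Pinf. rewrite nu_null_where_density_infinite. exact Hw.
    + apply (mu_cunion_le Hnu); auto. intro k.
      rewrite nu_null_where_density_vanishes; auto; [|intros x [_ H]; exact H].
      apply (xle_lt_trans _ (tau (F k))); [apply (mu_mono Htau); auto; firstorder | apply HFfin].
    + apply (mu_cunion_le Hnu); auto. intro n.
      apply (mu_cunion_le Hnu); auto. intro m. apply nu_band_bound; auto.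
Qed.

End LowerBound.

End Density.

End Backward.

Lemma dominated_essential_sups nu : sigma_maxitive B nu -> sigma_principal B tau ->
  exists V : nat -> nat -> set E,
    (forall n m, dominated (nu := nu) (ratio n m) (V n m)) /\
    (forall n m S, dominated (nu := nu) (ratio n m) S ->
                   negligible B tau (fun x => S x /\ ~ V n m x)).
Proof.
  intros Hnu Hpr.
  assert (Hess : forall n m, exists Vq, dominated (nu := nu) (ratio n m) Vq /\
            forall S, dominated (nu := nu) (ratio n m) S ->
                      negligible B tau (fun x => S x /\ ~ Vq x)).
  { intros n m. exact (Hpr _ (dominated_sigma_ideal Hnu _ (ratio_nonneg n m))). }
  destruct (choice_nat _ (fun n => choice_nat _ (Hess n))) as [V HV].
  exists V. split; intros n m; apply HV.
Qed.

(* The density [c] built from the essential suprema represents [nu]: the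
   Shilkret integral is below [nu] by [shilkret_le], and any bound [r] on it
   bounds [nu] by [nu_le_shilkret_bound] and [le_of_le_mul_all]. *)
Lemma RN_of_sigma_finite_principal :
  sigma_finite B tau -> sigma_principal B tau -> RN_property B tau.
Proof.
  intros Hfin Hpr nu Hnu Hac.
  destruct (dominated_essential_sups nu Hnu Hpr) as [V [HV HVess]].
  exists (density V). split; [exact (density_measurable V HV)|].
  intros A HA. split.
  - intros v [t [Ht0 ->]]. apply shilkret_le; auto.
  - intros [r|] Hu; [|destruct (nu A); exact I].
    assert (Hr : 0 <= r).
    { specialize (Hu _ (ex_intro _ 0 (conj (Rle_refl 0) eq_refl))).
      rewrite xmul_0l in Hu. exact Hu. }
    apply le_of_le_mul_all; [exact Hr | apply (mu_nonneg Hnu); auto |].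
    intros d Hd. apply (nu_le_shilkret_bound Hnu Hac Hpr V HV HVess A r); auto.
    intros t Ht. apply Hu. eauto.
Qed.

End Reference.

End Shilkret.

Theorem mainTheorem2 (E : Type) (B : set E -> Prop) (tau : set E -> xR)
  (hE : inhabited E) (hB : sigma_algebra B) (htau : sigma_maxitive B tau) :
  RN_property B tau <-> (sigma_finite B tau /\ sigma_principal B tau).
Proof.
  split.
  - intro HRN. split; [apply RN_sigma_finite | apply RN_sigma_principal]; auto.
  - intros [Hfin Hpr]. apply RN_of_sigma_finite_principal; auto.
Qed.
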